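(* Let $\beta>0$, $K\ge1$, users $\mathcal X=\{x_1,\dots,x_m\}\subset\mathbb R^d$ and $\sigma:\mathbb R^d\times\mathbb R^d\to[0,1]$ be fixed. Then the welfare $W$, viewed as a function of a finite multiset of strategies, is submodular: for every finite multiset $S$ of strategies with $|S|\ge K-1$ and any strategies $s_x,s_y\in\mathbb R^d$, $$W(S\cup\{s_x\})-W(S)\ge W(S\cup\{s_x,s_y\})-W(S\cup\{s_y\}).$$
   Context: For a finite multiset $S$ of strategies (points of $\mathbb R^d$) with $|S|\ge K$ and a user $x_j$, $\mathcal T_j(S;K)$ is a sub-multiset of $K$ elements of $S$ with the largest values of $\sigma(\cdot,x_j)$; if $|S|=K-1$, $\mathcal T_j(S;K)=S\cup\{\bar s\}$ where $\bar s$ is a default item with $\sigma(\bar s,x)=0$ for all $x$. With $\varepsilon_s$ ($s\in\mathcal T_j(S;K)$) i.i.d. Gumbel of location $-\beta\gamma$ and scale $\beta$ (CDF $t\mapsto\exp(-e^{-(t+\beta\gamma)/\beta})$, $\gamma$ the Euler–Mascheroni constant), the welfare is $W(S)=\sum_{j=1}^m\mathbb E\big[\max_{s\in\mathcal T_j(S;K)}\{\sigma(s,x_j)+\varepsilon_s\}\big]$, which equals $\beta\sum_{j=1}^m\log\sum_{s\in\mathcal T_j(S;K)}\exp(\sigma(s,x_j)/\beta)$. When $S=\{s_1,\dots,s_n\}$ comes from a joint strategy of a competing content creation game, this is the social welfare of that game under top-$K$ recommendation and the Gumbel random-utility choice model. *)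

From HB Require Import structures.
From mathcomp Require Import all_boot all_order all_algebra.
From mathcomp Require Import all_classical all_reals all_analysis.
Set Implicit Arguments. Unset Strict Implicit. Unset Printing Implicit Defensive.
Import Order.TTheory GRing.Theory Num.Theory.
Local Open Scope ring_scope.

Section Welfare.
Variables (R : realType) (d : nat).
Notation strat := 'rV[R]_d.

(* A finite multiset of strategies is a list (order irrelevant). *)

(* Scores sigma(s, x) of the items of T_x(S;K): the K items of S with the
   largest scores (obtained by sorting S in decreasing score order and
   taking the first K), padded with default items of score 0 when
   |S| < K (the paper only uses the case |S| = K-1, i.e. one default). *)
Definition topK_scores (sigma : strat -> strat -> R) (K : nat)
    (S : seq strat) (x : strat) : seq R :=
  [seq sigma s x | s <- take K (sort (fun a b => sigma b x <= sigma a x) S)]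
  ++ nseq (K - size S) 0.

Definition welfare (sigma : strat -> strat -> R) (beta : R) (K m : nat)
    (X : 'I_m -> strat) (S : seq strat) : R :=
  beta * \sum_(j < m) ln (\sum_(v <- topK_scores sigma K S (X j)) expR (v / beta)).

End Welfare.

(* Substituting the increasing weights w = exp(v / beta), each user's term of
   the welfare is ln of the sum of the K largest weights of the multiset S
   padded with K weights 1 (the default items, which never outrank a real item
   because sigma >= 0).  Adding a weight a to a multiset raises this top-K sum
   by max(0, a - k), where k is its K-th largest weight; as k can only grow
   when another item b is added, the increment of a shrinks, so the top-K sum
   is monotone and submodular.  Since ln(y + t) - ln y decreases in y and
   increases in t, the logarithm keeps the diminishing increments. *)

From HB Require Import structures.
From mathcomp Require Import all_boot all_order all_algebra.
From mathcomp Require Import all_classical all_reals all_analysis.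
From mathcomp Require Import lra.
Set Implicit Arguments. Unset Strict Implicit. Unset Printing Implicit Defensive.
Import Order.TTheory GRing.Theory Num.Theory.
Local Open Scope ring_scope.

Lemma take_cat_nseq (T : Type) n (c : T) s :
  take n (s ++ nseq n c) = take n s ++ nseq (n - size s) c.
Proof.
rewrite take_cat; case: ltnP => [lt_n_s|le_s_n].
  by rewrite (_ : (n - size s)%N = 0%N) ?cats0 //; apply/eqP; rewrite subn_eq0 ltnW.
by rewrite (take_oversize le_s_n) take_nseq // leq_subr.
Qed.

Lemma sort_ge_cat_nseq (disp : Order.disp_t) (T : orderType disp) n (c : T) s :
  all (>= c)%O s -> sort >=%O (s ++ nseq n c) = sort >=%O s ++ nseq n c.
Proof.
move=> s_ge_c; apply: (sorted_eq ge_trans ge_anti).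
- exact/sort_sorted/ge_total.
- rewrite (sorted_pairwise ge_trans) pairwise_cat -(sorted_pairwise ge_trans).
  rewrite (sort_sorted ge_total) /=; apply/andP; split.
    apply/allrelP => x y; rewrite mem_sort => /(allP s_ge_c) x_ge_c /nseqP[-> _].
    exact: x_ge_c.
  by elim: n => //= n ->; rewrite andbT; apply/allP => y /nseqP[-> _]; exact: lexx.
by rewrite perm_sort perm_cat2r perm_sym perm_sort.
Qed.

Section TopSum.
Variable R : realDomainType.
Implicit Types (a b : R) (s : seq R).

Definition top_sum K s := \sum_(v <- take K (sort >=%R s)) v.

Definition kth_largest K s := nth 0 (sort >=%R s) K.-1.

Lemma merge1_cons a x s :
  merge >=%R [:: a] (x :: s) = if x <= a then a :: x :: s else x :: merge >=%R [:: a] s.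
Proof. by []. Qed.

Lemma sort_ge_cons a s : sort >=%R (a :: s) = merge >=%R [:: a] (sort >=%R s).
Proof.
apply: (sorted_eq ge_trans ge_anti).
- exact/sort_sorted/ge_total.
- by rewrite (merge_sorted ge_total) ?(sort_sorted ge_total).
by rewrite perm_sort perm_sym perm_merge /= perm_cons perm_sort.
Qed.

Lemma sum_take_merge1 K a s : sorted >=%R s -> (0 < K <= size s)%N ->
  \sum_(v <- take K (merge >=%R [:: a] s)) v =
  \sum_(v <- take K s) v + Num.max 0 (a - nth 0 s K.-1).
Proof.
elim: s K => [|x s IHs] [|K] // sorted_xs /andP[_ le_K_s].
rewrite merge1_cons; case: ifP => [le_x_a|/negbT].
  have nth_le_x : nth 0 (x :: s) K <= x.
    have /predU1P[-> //|] : nth 0 (x :: s) K \in x :: s by exact: mem_nth.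
    exact: allP (order_path_min ge_trans sorted_xs) _.
  have -> : Num.max 0 (a - nth 0 (x :: s) K) = a - nth 0 (x :: s) K.
    by apply/max_idPr; rewrite subr_ge0 (le_trans nth_le_x).
  rewrite (_ : take K.+1 (a :: _) = a :: take K (x :: s)) // big_cons.
  rewrite (take_nth 0) // -cats1 big_cat big_seq1 /=; lra.
rewrite -ltNge => lt_a_x.
rewrite (_ : take K.+1 (x :: merge _ _ _) = x :: take K (merge >=%R [:: a] s)) //.
rewrite (_ : take K.+1 (x :: s) = x :: take K s) // !big_cons -addrA.
congr (x + _); case: K le_K_s => [|K] le_K_s.
  by rewrite !take0 big_nil add0r; apply/esym/max_idPl; rewrite subr_le0 ltW.
by rewrite IHs ?(path_sorted sorted_xs).
Qed.

Lemma nth_merge1 a s i : sorted >=%R s -> (i < size s)%N ->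
  nth 0 s i <= nth 0 (merge >=%R [:: a] s) i.
Proof.
elim: s i => [|x s IHs] i // sorted_xs lt_i_s; rewrite merge1_cons.
case: ifP => [le_x_a|_]; case: i lt_i_s => [|i] lt_i_s //=.
- have le_nth := sorted_leq_nth ge_trans lexx 0 sorted_xs.
  by apply: (le_nth i i.+1); rewrite ?inE ?leqnSn // ltnW.
- exact: IHs (path_sorted sorted_xs) _.
Qed.

Lemma top_sum_cons K a s : (0 < K <= size s)%N ->
  top_sum K (a :: s) = top_sum K s + Num.max 0 (a - kth_largest K s).
Proof.
move=> K_s; rewrite /top_sum /kth_largest sort_ge_cons.
by rewrite sum_take_merge1 ?size_sort ?(sort_sorted ge_total).
Qed.

Lemma kth_largest_le_cons K b s : (0 < K <= size s)%N ->
  kth_largest K s <= kth_largest K (b :: s).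
Proof.
case/andP=> K_gt0 le_K_s; rewrite /kth_largest sort_ge_cons.
apply: nth_merge1; first exact/sort_sorted/ge_total.
by rewrite size_sort prednK.
Qed.

Lemma top_sum_gt0 K s : (0 < K <= size s)%N -> all (> 0) s -> 0 < top_sum K s.
Proof.
case/andP=> K_gt0 le_K_s s_gt0.
have : all (> 0) (sort >=%R s) by rewrite all_sort.
have : (0 < size (sort >=%R s))%N by rewrite size_sort (leq_trans K_gt0).
rewrite /top_sum; case: (sort _ s) => [|x t] // _ /andP[x_gt0 t_gt0].
case: K K_gt0 {le_K_s} => // K _ /=; rewrite big_cons (lt_le_trans x_gt0) // lerDl.
by rewrite big_seq sumr_ge0 // => y /mem_take/(allP t_gt0)/ltW.
Qed.

Lemma top_sum_le_cons K a s : (0 < K <= size s)%N -> top_sum K s <= top_sum K (a :: s).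
Proof. by move=> K_s; rewrite top_sum_cons // lerDl le_max lexx. Qed.

Lemma top_sum_submod K a b s : (0 < K <= size s)%N ->
  top_sum K (a :: b :: s) - top_sum K (b :: s) <= top_sum K (a :: s) - top_sum K s.
Proof.
move=> K_s; have K_bs : (0 < K <= size (b :: s))%N.
  by case/andP: K_s => -> /leqW.
rewrite !top_sum_cons // [X in X - _ <= _]addrC [X in _ <= X - _]addrC !addrK.
by rewrite ge_max !le_max lexx lerD2l lerN2 kth_largest_le_cons ?orbT.
Qed.

End TopSum.

Lemma ln_increment_le (R : realType) (x x' y y' : R) :
  0 < x <= y -> y <= y' -> y' - y <= x' - x -> ln y' - ln y <= ln x' - ln x.
Proof.
case/andP=> x_gt0 le_x_y le_y_y' le_incr.
have y_gt0 := lt_le_trans x_gt0 le_x_y; have y'_gt0 := lt_le_trans y_gt0 le_y_y'.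
have x'_gt0 : 0 < x' by lra.
rewrite -!ln_div ?posrE // ler_ln ?posrE ?divr_gt0 //.
rewrite ler_pdivrMr // mulrAC ler_pdivlMr //; nra.
Qed.

Lemma ln_top_sum_submod (R : realType) K (a b : R) s : (0 < K <= size s)%N ->
  all (> 0) s ->
  ln (top_sum K (a :: b :: s)) - ln (top_sum K (b :: s)) <=
  ln (top_sum K (a :: s)) - ln (top_sum K s).
Proof.
move=> K_s s_gt0; have K_bs : (0 < K <= size (b :: s))%N.
  by case/andP: K_s => -> /leqW.
by apply: ln_increment_le; rewrite ?top_sum_gt0 ?top_sum_le_cons ?top_sum_submod.
Qed.

Lemma sum_expR_topK_scores (R : realType) d (sigma : 'rV[R]_d -> 'rV[R]_d -> R)
    (beta : R) K S x : 0 < beta -> (forall s, 0 <= sigma s x) ->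
  \sum_(v <- topK_scores sigma K S x) expR (v / beta) =
  top_sum K ([seq expR (sigma s x / beta) | s <- S] ++ nseq K 1).
Proof.
move=> beta_gt0 sigma_ge0; set g := fun s => expR (sigma s x / beta).
have g_mono : {mono g : s t / sigma t x <= sigma s x >-> s >= t}.
  by move=> s t; rewrite ler_expR ler_pM2r ?invr_gt0.
have g_ge1 : all (>= 1) [seq g s | s <- S].
  apply/allP => _ /mapP[s _ ->]; rewrite -expR0 ler_expR.
  exact: divr_ge0 (sigma_ge0 s) (ltW beta_gt0).
rewrite /top_sum sort_ge_cat_nseq // take_cat_nseq size_sort size_map.
rewrite -(map_sort g_mono) -map_take /topK_scores !big_cat !big_map /=.
by congr (_ + _); rewrite !big_nseq mul0r expR0.
Qed.

Theorem lemma2 (R : realType) (d : nat) (beta : R) (K m : nat)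
    (X : 'I_m -> 'rV[R]_d) (sigma : 'rV[R]_d -> 'rV[R]_d -> R)
    (hbeta : 0 < beta) (hK : (1 <= K)%N)
    (hsigma : forall s x, 0 <= sigma s x <= 1)
    (S : seq 'rV[R]_d) (hS : (K.-1 <= size S)%N) (sx sy : 'rV[R]_d) :
  welfare sigma beta K X (sx :: S) - welfare sigma beta K X S >=
  welfare sigma beta K X (sx :: sy :: S) - welfare sigma beta K X (sy :: S).
Proof.
rewrite /welfare -!mulrBr ler_pM2l // -!sumrB; apply: ler_sum => j _.
have sigma_ge0 s : 0 <= sigma s (X j) by case/andP: (hsigma s (X j)).
rewrite !sum_expR_topK_scores //=; apply: ln_top_sum_submod.
- by rewrite hK size_cat size_nseq leq_addl.
- rewrite all_cat all_nseq ltr01 orbT andbT.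
  by apply/allP => _ /mapP[s _ ->]; exact: expR_gt0.
Qed.
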